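(* Let $U=U_kV_k\cdots U_1V_1U_0$ be a product of unitaries alternating between incoherent unitaries $U_i$ and (generalised controlled) Hadamards $V_i$. Then for any state $|\psi\rangle$ the coherence rank satisfies $\dfrac{\chi(|\psi\rangle)}{2^k}\le \chi(U|\psi\rangle)\le 2^k\chi(|\psi\rangle)$.
   Context: The coherence rank $\chi(|\psi\rangle)$ of a pure state is the minimum number of terms needed to write it as a linear combination of computational basis states. A unitary is incoherent if it has the form $\sum_x e^{i\theta_x}|\pi(x)\rangle\langle x|$ for real $\theta_x$ and a permutation $\pi$. A generalised controlled Hadamard is $\sum_{x\in S}|x\rangle\langle x|\otimes H+\sum_{y\in S^c}|y\rangle\langle y|\otimes I$ for a subset $S$ of bitstrings (this includes a plain Hadamard on one qubit). *)

From HB Require Import structures.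
From mathcomp Require Import all_boot all_order all_algebra.
From mathcomp Require Import fingroup perm complex.
From mathcomp Require Import reals.
Set Implicit Arguments. Unset Strict Implicit. Unset Printing Implicit Defensive.
Import Order.TTheory GRing.Theory Num.Theory.
Local Open Scope ring_scope.

Section Qubits.
Variables (R : realType) (n : nat).

Definition bits := {ffun 'I_n -> bool}.

Definition state := bits -> R[i].
Definition operator := bits -> bits -> R[i].

Definition apply_op (A : operator) (psi : state) : state :=
  fun x => \sum_(y : bits) A x y * psi y.

Definition normalized (psi : state) : Prop :=
  \sum_(x : bits) `|psi x| ^+ 2 = 1.

(* coherence rank: minimal number of computational basis states whose linear
   span contains psi *)
Definition rank_pred (psi : state) : pred nat := fun k =>
  [exists A : {set bits},
     (#|A| == k) && [forall x : bits, (x \notin A) ==> (psi x == 0)]].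

Lemma rank_pred_ex (psi : state) : exists k, rank_pred psi k.
Proof.
exists #|[set: bits]|; apply/existsP; exists [set: bits].
by rewrite eqxx /=; apply/forallP => x; rewrite in_setT.
Qed.

Definition coherence_rank (psi : state) : nat := ex_minn (rank_pred_ex psi).

(* incoherent unitary: sum_x e^{i theta_x} |pi(x)><x| ; the phases e^{i theta}
   with theta real are exactly the complex numbers of modulus one *)
Definition incoherent (A : operator) : Prop :=
  exists (p : {perm bits}) (ph : bits -> R[i]),
    (forall x, `|ph x| = 1) /\
    (forall x y, A x y = if x == p y then ph y else 0).

Definition hadamard (a b : bool) : R[i] :=
  (if a && b then -1 else 1) / sqrtC 2.

Definition clear_bit (t : 'I_n) (x : bits) : bits :=
  [ffun i => if i == t then false else x i].

(* generalised controlled Hadamard with target qubit t and control set S of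
   bitstrings of the other qubits (encoded with bit t equal to false):
   sum_{c in S} |c><c| (x) H_t + sum_{c notin S} |c><c| (x) I_t *)
Definition gch_op (t : 'I_n) (S : {set bits}) : operator := fun x y =>
  if clear_bit t x == clear_bit t y then
    (if clear_bit t y \in S then hadamard (x t) (y t)
     else (if x t == y t then 1 else 0))
  else 0.

Definition gen_controlled_hadamard (A : operator) : Prop :=
  exists (t : 'I_n) (S : {set bits}), forall x y, A x y = gch_op t S x y.

Fixpoint circuit (U V : nat -> operator) (k : nat) (psi : state) : state :=
  match k with
  | 0 => apply_op (U 0%N) psi
  | k'.+1 => apply_op (U k) (apply_op (V k) (circuit U V k' psi))
  end.

End Qubits.

(* The coherence rank of a state is the size of its support in the computational
   basis.  An incoherent unitary permutes the basis up to nonzero phases, so it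
   maps the support bijectively and preserves the rank.  A generalised
   controlled Hadamard acting on qubit t only mixes each basis state x with its
   neighbour x' obtained by flipping bit t, so the support of its output lies in
   the union of the support and its flipped copy: the rank at most doubles.  As
   this gate is an involution, applying the same bound to its output shows that
   the rank at most halves.  Induction along the circuit gives the factor 2^k
   in both directions. *)
From HB Require Import structures.
From mathcomp Require Import all_boot all_order all_algebra.
From mathcomp Require Import fingroup perm complex.
From mathcomp Require Import reals.
From mathcomp Require Import ring.
Set Implicit Arguments. Unset Strict Implicit. Unset Printing Implicit Defensive.
Import Order.TTheory GRing.Theory Num.Theory.
Local Open Scope ring_scope.

Section Support.
Variables (R : realType) (n : nat).
Implicit Types (psi phi : state R n) (A : operator R n) (x y : bits n).

Definition supp psi : {set bits n} := [set x | psi x != 0].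

Lemma eq_apply_op A (B : operator R n) psi :
  A =2 B -> apply_op A psi =1 apply_op B psi.
Proof. by move=> eqAB x; apply: eq_bigr => y _; rewrite eqAB. Qed.

Lemma eq_supp psi phi : psi =1 phi -> supp psi = supp phi.
Proof. by move=> E; apply/setP => x; rewrite !inE E. Qed.

Lemma coherence_rankE psi : coherence_rank psi = #|supp psi|.
Proof.
rewrite /coherence_rank.
case: ex_minnP => m /existsP[B /andP[/eqP <- /forallP zB]] min_m.
apply/eqP; rewrite eqn_leq; apply/andP; split.
- apply: min_m; apply/existsP; exists (supp psi); rewrite eqxx /=.
  by apply/forallP => x; apply/implyP; rewrite inE negbK.
- apply/subset_leq_card/subsetP => x; rewrite inE; apply: contraR => xB.
  exact: implyP (zB x) xB.
Qed.

Lemma coherence_rank_incoherent A psi :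
  incoherent A -> coherence_rank (apply_op A psi) = coherence_rank psi.
Proof.
case=> p [ph [norm_ph defA]]; rewrite !coherence_rankE; set q := (p^-1)%g.
have applyE x : apply_op A psi x = ph (q x) * psi (q x).
  rewrite /apply_op (bigD1 (q x)) //= defA permKV eqxx big1 ?addr0 // => y qx_y.
  rewrite defA; case: eqP => [xE|]; last by rewrite mul0r.
  by move: qx_y; rewrite xE /q permK eqxx.
have ph_neq0 y : ph y != 0 by rewrite -normr_eq0 norm_ph oner_neq0.
have -> : supp (apply_op A psi) = q @^-1: supp psi.
  by apply/setP => x; rewrite !inE applyE mulf_eq0 negb_or ph_neq0.
by rewrite card_preimset //; apply: perm_inj.
Qed.

Definition flip_bit (t : 'I_n) x : bits n :=
  [ffun i => if i == t then ~~ x i else x i].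

Lemma flip_bitK t : involutive (flip_bit t).
Proof. by move=> x; apply/ffunP => i; rewrite !ffunE; case: eqP => // _; rewrite negbK. Qed.

Lemma flip_bit_at t x : flip_bit t x t = ~~ x t.
Proof. by rewrite ffunE eqxx. Qed.

Lemma flip_bit_neq t x : flip_bit t x != x.
Proof. by apply/eqP => /ffunP/(_ t); rewrite flip_bit_at; case: (x t). Qed.

Lemma clear_bit_flip t x : clear_bit t (flip_bit t x) = clear_bit t x.
Proof. by apply/ffunP => i; rewrite !ffunE; case: eqP. Qed.

Lemma eq_clear_bit t x y :
  clear_bit t x = clear_bit t y -> y = x \/ y = flip_bit t x.
Proof.
move=> /ffunP eq_xy.
have off_t i : i != t -> y i = x i.
  by move=> /negbTE i_neq_t; move: (eq_xy i); rewrite !ffunE i_neq_t.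
have [xy_t|xy_t] := eqVneq (y t) (x t); [left|right]; apply/ffunP => i;
  rewrite ?ffunE; have [->|/off_t] := eqVneq i t; rewrite ?eqxx //.
by move: xy_t; case: (y t); case: (x t).
Qed.

Definition bit_local (t : 'I_n) A :=
  forall x y, clear_bit t x != clear_bit t y -> A x y = 0.

Lemma apply_bit_local t A psi x : bit_local t A ->
  apply_op A psi x = A x x * psi x + A x (flip_bit t x) * psi (flip_bit t x).
Proof.
move=> local_A; rewrite /apply_op (bigD1 x) //= (bigD1 (flip_bit t x)) /=;
  last by rewrite flip_bit_neq.
rewrite addrA big1 ?addr0 // => y /andP[y_neq_x y_neq_fx].
have [eq_xy|neq_xy] := eqVneq (clear_bit t x) (clear_bit t y).
  by case: (eq_clear_bit eq_xy) => yE; rewrite yE eqxx in y_neq_x y_neq_fx.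
by rewrite local_A // mul0r.
Qed.

Lemma supp_apply_bit_local t A psi : bit_local t A ->
  supp (apply_op A psi) \subset supp psi :|: flip_bit t @: supp psi.
Proof.
move=> local_A; apply/subsetP => x; rewrite !inE (apply_bit_local _ _ local_A).
have [psi_x|_] := eqVneq (psi x) 0; last by [].
rewrite psi_x mulr0 add0r mulf_eq0 negb_or => /andP[_ psi_fx] /=.
by rewrite -[x](flip_bitK t) imset_f // inE.
Qed.

Lemma card_supp_apply_bit_local t A psi : bit_local t A ->
  (#|supp (apply_op A psi)| <= 2 * #|supp psi|)%N.
Proof.
move=> local_A; apply: leq_trans (subset_leq_card (supp_apply_bit_local psi local_A)) _.
by rewrite mul2n -addnn (leq_trans (leq_card_setU _ _)) ?leq_add ?leq_imset_card.
Qed.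

Lemma gch_op_bit_local t S : bit_local t (gch_op R t S).
Proof. by move=> x y /negbTE neq_xy; rewrite /gch_op neq_xy. Qed.

Lemma gch_opK t S psi :
  apply_op (gch_op R t S) (apply_op (gch_op R t S) psi) =1 psi.
Proof.
move=> x; have local_G := @gch_op_bit_local t S.
rewrite !(apply_bit_local _ _ local_G) flip_bitK /gch_op clear_bit_flip eqxx flip_bit_at.
pose u := (sqrtC 2)^-1 : R[i]; have u2 : u * u = 2^-1 :> R[i].
  by rewrite -invfM -expr2 sqrtCK.
have hadamardE a b : hadamard R a b = if a && b then - u else u.
  by rewrite /hadamard; case: (a && b); rewrite ?mulN1r ?mul1r.
case: (clear_bit t x \in S); case: (x t) => /=; rewrite ?mul1r ?mul0r ?addr0 //.
all: by rewrite !hadamardE /= !mulrDr !mulrA ?mulrN ?mulNr u2; field.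
Qed.

Lemma coherence_rank_gch_le A psi : gen_controlled_hadamard A ->
  (coherence_rank (apply_op A psi) <= 2 * coherence_rank psi)%N.
Proof.
case=> t [S defA]; rewrite !coherence_rankE (eq_supp (eq_apply_op psi defA)).
exact/card_supp_apply_bit_local/gch_op_bit_local.
Qed.

Lemma coherence_rank_gch_ge A psi : gen_controlled_hadamard A ->
  (coherence_rank psi <= 2 * coherence_rank (apply_op A psi))%N.
Proof.
case=> t [S defA]; rewrite !coherence_rankE (eq_supp (eq_apply_op psi defA)).
rewrite -{1}(eq_supp (gch_opK t S psi)).
exact/card_supp_apply_bit_local/gch_op_bit_local.
Qed.

End Support.

Lemma coherence_rank_circuit (R : realType) (n k : nat) (U V : nat -> operator R n)
  (psi : state R n) :
  (forall i, (i <= k)%N -> incoherent (U i)) ->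
  (forall i, (1 <= i <= k)%N -> gen_controlled_hadamard (V i)) ->
  (coherence_rank psi <= 2 ^ k * coherence_rank (circuit U V k psi))%N /\
  (coherence_rank (circuit U V k psi) <= 2 ^ k * coherence_rank psi)%N.
Proof.
elim: k => [|k IHk] hU hV /=; rewrite coherence_rank_incoherent; try exact: hU.
  by rewrite expn0 mul1n; split.
have [|i /andP[i_gt0 le_ik]|IH_ge IH_le] := IHk.
- by move=> i /leqW; apply: hU.
- by apply: (hV i); rewrite i_gt0 leqW.
have hVk := hV k.+1 (leqnn k.+1).
rewrite expnSr; split.
- by rewrite -mulnA (leq_trans IH_ge) // leq_pmul2l ?expn_gt0 // coherence_rank_gch_ge.
- by rewrite (mulnC (2 ^ k)%N) -mulnA (leq_trans (coherence_rank_gch_le _ hVk)) ?leq_pmul2l.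
Qed.

Theorem lemma2 (R : realType) (n k : nat) (U V : nat -> operator R n)
  (hU : forall i, (i <= k)%N -> incoherent (U i))
  (hV : forall i, (1 <= i <= k)%N -> gen_controlled_hadamard (V i))
  (psi : state R n) (hpsi : normalized psi) :
  (coherence_rank psi)%:R / 2 ^+ k <= (coherence_rank (circuit U V k psi))%:R :> R /\
  (coherence_rank (circuit U V k psi))%:R <= 2 ^+ k * (coherence_rank psi)%:R :> R.
Proof.
have [rank_ge rank_le] := coherence_rank_circuit psi hU hV.
rewrite ler_pdivrMr ?exprn_gt0 // -natrX -!natrM !ler_nat mulnC.
by split.
Qed.
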